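(* Let $G=(V,E,w)$ be an edge-weighted graph with positive rational weights and no isolated vertices. The greedy algorithm applied to $U=V$ and the function $h$ returns a WPPIDS $S$ with $|S|\le\big(1+\ln(\delta_{\max}/\delta_{\min})\big)\cdot|S^*|$, where $\delta_{\max}\le\frac32 W$ and $\delta_{\min}\ge 1/L$; in particular $|S|\le\big(1+\ln(\tfrac32\cdot L\cdot W)\big)\cdot|S^*|$, where $S^*$ is a minimum-cardinality WPPIDS.
   Context: $N_A(v)=N(v)\cap A$, $W_A(v)=\sum_{u\in N_A(v)}w_{(v,u)}$, $W(v)=W_V(v)$, $W=\max_{v\in V}W(v)$. $h(A)=\sum_{v\in V}h_A(v)$ with $h_A(v)=W(v)/2$ if $v\in A$ or $W_A(v)\ge W(v)/2$, and $h_A(v)=W_A(v)$ otherwise. For $v$ with incident edge weights $w_1,\dots,w_d$, write $w_0=W(v)/2$ and each $w_i$ as a reduced fraction $p_i/q_i$; $l(v)=\mathrm{lcm}\{q_0,\dots,q_d\}$ and $L=\max_v l(v)$. $\Delta_x h(A)=h(A\cup\{x\})-h(A)$. The greedy algorithm: start with $S=\emptyset$; while some $u\in U\setminus S$ has $\Delta_u h(S)>0$, add to $S$ an element $x\in U\setminus S$ maximizing $\Delta_u h(S)$ (ties arbitrary); return $S$, with chosen elements $s_1,s_2,\dots$ in order, $S_i=\{s_1,\dots,s_i\}$. $\delta_{\max}=\Delta_{s_1}h(\emptyset)$ and $\delta_{\min}=\min_i\Delta_{s_i}h(S_{i-1})$. A WPPIDS is a set $S\subseteq V$ such that every $v\in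 V\setminus S$ satisfies $W_S(v)\ge W(v)/2$. *)

From HB Require Import structures.
From mathcomp Require Import all_boot all_order all_algebra.
From mathcomp Require Import all_classical all_reals all_analysis.
Set Implicit Arguments. Unset Strict Implicit. Unset Printing Implicit Defensive.
Import Order.TTheory GRing.Theory Num.Theory.
Local Open Scope ring_scope.

Section WPPIDS.
Variables (V : finType) (e : rel V) (w : V -> V -> rat).

Definition WA (A : {set V}) (v : V) : rat := \sum_(u in A | e v u) w v u.
Definition Wv (v : V) : rat := WA [set: V] v.
(* W = max_v W(v) (all W(v) are >= 0 for positive weights) *)
Definition Wmax : rat := \big[Num.max/0]_(v : V) Wv v.

Definition hA (A : {set V}) (v : V) : rat :=
  if (v \in A) || (Wv v / 2%:R <= WA A v) then Wv v / 2%:R else WA A v.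
Definition h (A : {set V}) : rat := \sum_(v : V) hA A v.
Definition Delta (x : V) (A : {set V}) : rat := h (x |: A) - h A.

Definition lv (v : V) : nat :=
  lcmn `|denq (Wv v / 2%:R)|%N (\big[lcmn/1%N]_(u | e v u) `|denq (w v u)|%N).
Definition Lmax : nat := \max_(v : V) lv v.

Definition is_wppids (S : {set V}) : Prop :=
  forall v, v \notin S -> Wv v / 2%:R <= WA S v.

Definition is_min_wppids (S : {set V}) : Prop :=
  is_wppids S /\ forall T, is_wppids T -> (#|S| <= #|T|)%N.

(* s = [:: s_1; ...; s_k] is a possible run (any tie-breaking) of the greedy
   algorithm on U = V with function h *)
Definition greedy_run (s : seq V) : Prop :=
  (forall s1 x s2, s = s1 ++ x :: s2 ->
     let A := [set y in s1] in
     [/\ x \notin A, 0 < Delta x A & forall u, u \notin A -> Delta u A <= Delta x A])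
  /\ (forall u, u \notin [set y in s] -> Delta u [set y in s] <= 0).

Fixpoint gains (A : {set V}) (s : seq V) : seq rat :=
  if s is x :: s' then Delta x A :: gains (x |: A) s' else [::].

Definition delta_max (s : seq V) : rat := head 0 (gains (@finset.set0 V) s).
Definition delta_min (s : seq V) : rat :=
  let g := gains (@finset.set0 V) s in foldr Num.min (head 0 g) g.

End WPPIDS.

From HB Require Import structures.
From mathcomp Require Import all_boot all_order all_algebra.
From mathcomp Require Import all_classical all_reals all_analysis.
(* Re-imported so that their lemma names shadow those of classical_sets. *)
From mathcomp Require Import fintype finset.
From mathcomp Require Import ring lra.
Import Order.TTheory GRing.Theory Num.Theory.
Local Open Scope ring_scope.

(* Wolsey's analysis of greedy submodular cover.  The function h is monotone
   and submodular, since h_A(v) is the truncation at W(v)/2 of a nonnegative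
   modular function of A.  If the greedy step picks x at A, submodularity along
   an optimal S* gives r(A) <= |S*| * gain(x) for the residual
   r(A) = h(V) - h(A), so every step removes at least delta_min and at least a
   1/|S*| fraction of the residual.  Hence the potential equal to r/delta_min
   for r <= |S*| delta_min and to |S*| (1 + ln (r / (|S*| delta_min))) beyond
   drops by at least 1 per step; initially it is at most
   |S*| (1 + ln (delta_max / delta_min)).  With rational weights every positive
   gain is a positive multiple of some 1/l(v) >= 1/L, and the first vertex gains
   at most W(x) + W(x)/2. *)

Lemma ln_ge1BV {R : realType} {x : R} : 0 < x -> 1 - x^-1 <= ln x.
Proof.
move=> x0; have Vx0 : 0 < x^-1 by rewrite invr_gt0.
have := @le_ln1Dx R (x^-1 - 1); rewrite [1 + _]addrC subrK lnV ?posrE //; lra.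
Qed.

Section Potential.
Context {R : realType} (m d : R).
Hypotheses (m_ge1 : 1 <= m) (d_gt0 : 0 < d).

Definition potential (r : R) : R :=
  if r <= m * d then r / d else m * (1 + ln (r / (m * d))).

Let m_gt0 : 0 < m. Proof. exact: lt_le_trans ltr01 m_ge1. Qed.
Let md_gt0 : 0 < m * d. Proof. exact: mulr_gt0. Qed.

Lemma potential_ge0 r : 0 <= r -> 0 <= potential r.
Proof.
move=> r0; rewrite /potential; case: ifPn => [_|]; first by rewrite divr_ge0 // ltW.
rewrite -ltNge => hr; rewrite mulr_ge0 ?addr_ge0 ?ln_ge0 ?ltW //.
by rewrite ltr_pdivlMr // mul1r.
Qed.

Lemma potential_lin r : r <= m * d -> potential r = r / d.
Proof. by rewrite /potential => ->. Qed.

Lemma potential_log r : m * d <= r -> potential r = m * (1 + ln (r / (m * d))).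
Proof.
rewrite /potential; case: ifPn => // hr hr'.
have -> : r = m * d by apply/le_anti; rewrite hr hr'.
by rewrite divff ?gt_eqF // ln1 addr0 mulr1 mulfK // gt_eqF.
Qed.

Lemma potential_log_increment r' r : m * d <= r' -> r' <= r ->
  m * (r - r') / r <= potential r - potential r'.
Proof.
move=> hr' hr; have r'0 : 0 < r' by exact: lt_le_trans hr'.
have r0 : 0 < r by exact: lt_le_trans hr.
rewrite !potential_log // ?(le_trans hr') //.
rewrite !ln_div ?posrE // ?divr_gt0 //.
have := ln_ge1BV (divr_gt0 r0 r'0); rewrite invf_div ln_div ?posrE //.
have -> : m * (r - r') / r = m * (1 - r' / r) by field; rewrite gt_eqF.
move=> h; rewrite -mulrBr ler_pM2l //; move: h; set q := r' / r; lra.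
Qed.

Lemma potential_increment r' r : r' <= r -> m * d <= r ->
  m * (r - r') / r <= potential r - potential r'.
Proof.
move=> hr' hr; case: (lerP (m * d) r') => hmd; first exact: potential_log_increment.
have r0 : 0 < r by exact: lt_le_trans hr.
have := @potential_log_increment (m * d) r (lexx _) hr.
rewrite (potential_lin _ (ltW hmd)) (potential_lin _ (lexx _)) mulfK ?gt_eqF //.
have : m * (m * d - r') / r <= (m * d - r') / d.
  by rewrite ler_pdivrMr // mulrAC ler_pdivlMr // mulrAC [_ * r]mulrC ler_pM2r // subr_gt0.
have -> : m * (r - r') / r = m * (r - m * d) / r + m * (m * d - r') / r.
  by field; rewrite gt_eqF.
have -> : (m * d - r') / d = m - r' / d by field; rewrite gt_eqF.
lra.
Qed.

Lemma potential_step r' r : d <= r - r' -> r <= m * (r - r') ->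
  1 + potential r' <= potential r.
Proof.
move=> hd hm; have r'r : r' <= r by rewrite -subr_ge0 (le_trans (ltW d_gt0) hd).
case: (lerP r (m * d)) => hr.
  rewrite !potential_lin ?(le_trans r'r hr) //.
  by rewrite -[1](@divff _ d) ?gt_eqF // -mulrDl ler_pM2r ?invr_gt0 // -lerBrDr.
have r0 : 0 < r by exact: lt_trans hr.
have : 1 <= m * (r - r') / r by rewrite ler_pdivlMr // mul1r.
have := @potential_increment r' r r'r (ltW hr); lra.
Qed.

Lemma potential_le_log D r : d <= D -> 0 <= r -> r <= m * D ->
  potential r <= m * (1 + ln (D / d)).
Proof.
move=> dD r0 rD; have lnD0 : 0 <= ln (D / d) by rewrite ln_ge0 // ler_pdivlMr // mul1r.
rewrite /potential; case: ifPn => [hr|]; first by rewrite ler_pdivrMr //; nra.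
rewrite -ltNge => hr; rewrite ler_pM2l // lerD2l.
have r0' : 0 < r := lt_trans md_gt0 hr.
have D0 : 0 < D := lt_le_trans d_gt0 dD.
by rewrite ler_ln ?posrE ?divr_gt0 // ler_pdivrMr // mulrCA divfK ?gt_eqF.
Qed.

End Potential.

Lemma min_increment_le (R : realDomainType) (c y y' a a' : R) :
  0 <= a' <= a -> y <= y' ->
  Num.min c (y' + a') - Num.min c y' <= Num.min c (y + a) - Num.min c y.
Proof. by move=> /andP[? ?] ?; rewrite !minElt; do 4?[case: ltP => ?]; lra. Qed.

Lemma mul_denq_dvd_int (q : rat) (n : nat) :
  (`|denq q| %| n)%N -> q * n%:R \is a Num.int.
Proof.
case/dvdnP => k ->; rewrite natrM mulrCA.
have -> : `|denq q|%:R = (denq q)%:~R :> rat by rewrite natr_absz gtr0_norm ?denq_gt0.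
by rewrite -numqE rpredM ?natr_int ?intr_int.
Qed.

Lemma ln_ratr_div_le {R : realType} (a b c l : rat) :
  0 < l -> l^-1 <= b -> b <= a -> a <= c -> ln (ratr (a / b) : R) <= ln (ratr (l * c)).
Proof.
move=> l0 lb ba ac; have b0 : 0 < b by apply: lt_le_trans lb; rewrite invr_gt0.
have lb1 : 1 <= l * b by rewrite -(@mulfV _ l) ?gt_eqF // ler_pM2l.
have a0 : 0 < a := lt_le_trans b0 ba.
rewrite ler_ln ?posrE ?ltr0q ?divr_gt0 ?mulr_gt0 ?(lt_le_trans a0 ac) // ler_rat.
rewrite ler_pdivrMr //; nra.
Qed.

Section FoldrMin.
Context {disp : Order.disp_t} {T : orderType disp}.
Implicit Types (b y : T) (ys : seq T).

Lemma foldr_min_le (x0 : T) ys y : y \in ys -> (foldr Order.min x0 ys <= y)%O.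
Proof. by move=> ys_y; rewrite foldrE ge_bigmin_seq. Qed.

Lemma foldr_min_head_ge (x0 : T) ys b : ys != [::] -> {in ys, forall y, b <= y}%O ->
  (b <= foldr Order.min (head x0 ys) ys)%O.
Proof.
case: ys => // y ys _ ys_ge; rewrite foldrE big_seq le_bigmin ?ys_ge ?mem_head //.
Qed.

End FoldrMin.

Section GreedyDefs.
Context {V : finType} (f : {set V} -> rat).
Implicit Types (A : {set V}) (x u : V) (t : seq V).

Definition gain x A := f (x |: A) - f A.

Definition greedy_choice A x :=
  0 < gain x A /\ forall u, u \notin A -> gain u A <= gain x A.

Fixpoint greedy_from A t : Prop :=
  if t is x :: t' then greedy_choice A x /\ greedy_from (x |: A) t' else True.

Fixpoint gain_seq A t : seq rat :=
  if t is x :: t' then gain x A :: gain_seq (x |: A) t' else [::].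

End GreedyDefs.

Section GreedySubmodular.
Context {V : finType} {f : {set V} -> rat}.
Hypothesis f_mono : forall A B : {set V}, A \subset B -> f A <= f B.
Hypothesis f_submod : forall x (A B : {set V}), A \subset B -> gain f x B <= gain f x A.

Implicit Types (A B T : {set V}) (x u : V) (t : seq V).

Lemma gain_ge0 x A : 0 <= gain f x A.
Proof. by rewrite subr_ge0 f_mono // subsetU1. Qed.

Lemma gain_mem x A : x \in A -> gain f x A = 0.
Proof. by move=> xA; rewrite /gain (setUidPr _) ?sub1set ?subrr. Qed.

Lemma gain_setU_le A t : f (A :|: [set y in t]) - f A <= \sum_(y <- t) gain f y A.
Proof.
elim: t => [|y t IH]; first by rewrite set_nil setU0 subrr big_nil.
rewrite set_cons big_cons setUCA.
have := f_submod y _ _ (subsetUl A [set z in t]); rewrite /gain; lra.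
Qed.

Lemma gain_cover_le T A x : f T = f setT ->
  (forall u, u \notin A -> gain f u A <= gain f x A) ->
  f setT - f A <= #|T|%:R * gain f x A.
Proof.
move=> fT xmax; rewrite -fT.
have := gain_setU_le A (enum T); rewrite set_enum big_enum /=.
have : f T <= f (A :|: T) by rewrite f_mono // subsetUr.
have : \sum_(y in T) gain f y A <= #|T|%:R * gain f x A.
  rewrite mulr_natl -sumr_const; apply: ler_sum => y _.
  by case: (boolP (y \in A)) => [/gain_mem->|/xmax]; rewrite ?gain_ge0.
lra.
Qed.

Lemma greedy_from_prefixes A t :
  (forall t1 x t2, t = t1 ++ x :: t2 -> greedy_choice f (A :|: [set y in t1]) x) ->
  greedy_from f A t.
Proof.
elim: t A => [|x t IH] A Ht //=; split.
  by have := Ht [::] x t erefl; rewrite set_nil setU0.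
apply: IH => t1 y t2 ht; rewrite -setUA setUCA -set_cons.
by apply: Ht; rewrite ht.
Qed.

Lemma greedy_gain_ge {A t b} : greedy_from f A t ->
  (forall x B, 0 < gain f x B -> b <= gain f x B) -> {in gain_seq f A t, forall g, b <= g}.
Proof.
move=> + pos_ge; elim: t A => //= x t IH A [[xpos _] ht] g.
by rewrite inE => /predU1P[->|]; [exact: pos_ge | exact: IH].
Qed.

Lemma ratr_gain_cover_le {R : realType} T A x : f T = f setT ->
  (forall u, u \notin A -> gain f u A <= gain f x A) ->
  ratr (f setT - f A) <= #|T|%:R * ratr (gain f x A) :> R.
Proof.
move=> fT xmax; rewrite -(rmorph_nat (ratr : {rmorphism rat -> R})) -rmorphM ler_rat.
exact: gain_cover_le.
Qed.

Lemma greedy_size_le_potential {R : realType} {T A t dm} :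
  f T = f setT -> (0 < #|T|)%N -> 0 < dm -> greedy_from f A t ->
  {in gain_seq f A t, forall g, dm <= g} ->
  ((size t)%:R : R) <= potential #|T|%:R (ratr dm) (ratr (f setT - f A)).
Proof.
move=> fT T0 dm0; have m1 : 1 <= (#|T|%:R : R) by rewrite ler1n.
have d0 : 0 < ratr dm :> R by rewrite ltr0q.
elim: t A => [|x t IH] A /=.
  by move=> _ _; apply: potential_ge0; rewrite // ler0q subr_ge0 f_mono ?subsetT.
move=> [[xpos xmax] ht] hg; rewrite -natr1 addrC.
have xgain : f setT - f A - (f setT - f (x |: A)) = gain f x A by rewrite /gain; ring.
apply: (le_trans _ (potential_step _ _ m1 d0 (ratr (f setT - f (x |: A))) _ _ _)).
- by rewrite lerD2l IH // => g g_t; apply: hg; rewrite inE g_t orbT.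
- by rewrite -rmorphB xgain ler_rat hg ?mem_head.
- by rewrite -rmorphB xgain; exact: ratr_gain_cover_le.
Qed.

Theorem greedy_size_le_log {R : realType} {T x t dm} :
  f T = f setT -> (0 < #|T|)%N -> 0 < dm -> greedy_from f set0 (x :: t) ->
  {in gain_seq f set0 (x :: t), forall g, dm <= g} ->
  ((size (x :: t))%:R : R) <= #|T|%:R * (1 + ln (ratr (gain f x set0 / dm))).
Proof.
move=> fT T0 dm0 greedy hg; rewrite fmorph_div.
apply: le_trans (greedy_size_le_potential fT T0 dm0 greedy hg) _.
apply: potential_le_log; rewrite ?ler1n ?ltr0q ?ler_rat ?hg ?mem_head //.
  by rewrite ler0q subr_ge0 f_mono ?subsetT.
by apply: ratr_gain_cover_le fT _; case: greedy => -[].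
Qed.

End GreedySubmodular.

Section InfluenceFunction.
Context {V : finType} {e : rel V} {w : V -> V -> rat}.
Hypothesis w_pos : forall u v, e u v -> 0 < w u v.
Implicit Types (A B : {set V}) (u v x : V).

Local Notation WA := (WA e w).
Local Notation Wv := (Wv e w).
Local Notation hA := (hA e w).
Local Notation h := (h e w).
Local Notation Delta := (Delta e w).

Lemma WA_ge0 A v : 0 <= WA A v.
Proof. by apply: sumr_ge0 => u /andP[_ /w_pos/ltW]. Qed.

Lemma WA_subset A B v : A \subset B -> WA A v <= WA B v.
Proof.
move=> AB; rewrite /WA [leLHS]big_mkcond [leRHS]big_mkcond /=.
apply: ler_sum => u _; case: (boolP (u \in A)) => [uA|_] /=.
  by rewrite (subsetP AB u uA) lexx.
by case: ifP => // /andP[_ /w_pos/ltW].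
Qed.

Lemma WA_setU1 x A v :
  WA (x |: A) v = WA A v + (if (x \notin A) && e v x then w v x else 0).
Proof.
case: (boolP (x \in A)) => xA /=; first by rewrite (setUidPr _) ?sub1set ?addr0.
by rewrite /WA !big_mkcondr /= big_setU1 //= addrC.
Qed.

Definition half_weight v := Wv v / 2%:R.

Definition influence A v := WA A v + (v \in A)%:R * half_weight v.

Lemma half_weight_ge0 v : 0 <= half_weight v.
Proof. by rewrite divr_ge0 ?WA_ge0. Qed.

Lemma hAE A v : hA A v = Num.min (half_weight v) (influence A v).
Proof.
have := WA_ge0 A v; rewrite /hA /influence /half_weight minElt.
case: (v \in A) => /=; rewrite ?mul1r ?mul0r ?addr0 => ?.
  by case: ltP => ?; lra.
by case: ltP => ?; case: leP => ?; lra.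
Qed.

Lemma influence_setU1 x A v : influence (x |: A) v = influence A v +
  (if x \in A then 0 else (if e v x then w v x else 0) + (x == v)%:R * half_weight v).
Proof.
rewrite /influence WA_setU1 in_setU1 [x == v]eq_sym.
case: (eqVneq v x) => [->|_]; case: (boolP (x \in A)) => xA; case: (e _ x).
all: by rewrite /= ?xA /=; ring.
Qed.

Lemma influence_subset A B v : A \subset B -> influence A v <= influence B v.
Proof.
move=> AB; rewrite /influence lerD ?WA_subset // ler_wpM2r ?half_weight_ge0 //.
by case: (boolP (v \in A)) => [/(subsetP AB)->|].
Qed.

Lemma hA_subset A B v : A \subset B -> hA A v <= hA B v.
Proof.
move=> AB; rewrite !hAE; have := influence_subset A B v AB.
by rewrite !minElt; do 2?[case: ltP => ?]; lra.
Qed.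

Lemma hA_increment_antitone x A B v : A \subset B ->
  hA (x |: B) v - hA B v <= hA (x |: A) v - hA A v.
Proof.
move=> AB; rewrite !hAE !influence_setU1.
set a := (if e v x then _ else _) + _.
have a_ge0 : 0 <= a.
  apply: addr_ge0; last by rewrite mulr_ge0 ?half_weight_ge0.
  by case: ifP => // /w_pos/ltW.
case: (boolP (x \in B)) => xB.
  rewrite addr0 subrr subr_ge0 !minElt; have := influence_subset A B v AB.
  by case: (x \in A); do 2?[case: ltP => ?]; lra.
have -> : x \in A = false by apply: contraNF xB; apply: (subsetP AB).
by rewrite min_increment_le ?a_ge0 ?lexx ?influence_subset.
Qed.

Lemma h_subset A B : A \subset B -> h A <= h B.
Proof. by move=> AB; apply: ler_sum => v _; exact: hA_subset. Qed.

Lemma DeltaE x A : Delta x A = \sum_v (hA (x |: A) v - hA A v).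
Proof. by rewrite /Delta /h sumrB. Qed.

Lemma Delta_antitone x A B : A \subset B -> Delta x B <= Delta x A.
Proof. by move=> AB; rewrite !DeltaE; apply: ler_sum => v _; exact: hA_increment_antitone. Qed.

Lemma Delta_ge_local x A v : hA (x |: A) v - hA A v <= Delta x A.
Proof.
rewrite DeltaE (bigD1 v) //= lerDl; apply: sumr_ge0 => u _.
by rewrite subr_ge0 hA_subset ?subsetU1.
Qed.

Lemma h_wppids S : is_wppids e w S -> h S = h setT.
Proof.
move=> S_wppids; apply: eq_bigr => v _; rewrite /hA in_setT.
by case: (boolP (v \in S)) => //= /S_wppids ->.
Qed.

Lemma Delta_gt0_deficient A v : v \notin A -> WA A v < half_weight v -> 0 < Delta v A.
Proof.
move=> vA deficient; apply: lt_le_trans (Delta_ge_local v A v).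
rewrite /hA setU11 (negbTE vA) /= -/(half_weight v) leNgt deficient /=.
by rewrite subr_gt0.
Qed.

Lemma wppids_saturated A : (forall u, u \notin A -> Delta u A <= 0) -> is_wppids e w A.
Proof.
move=> saturated v vA; rewrite leNgt; apply: contraTN (saturated v vA) => deficient.
by rewrite -ltNge Delta_gt0_deficient.
Qed.

Lemma Wv_gt0 v : (exists u, e v u) -> 0 < Wv v.
Proof.
move=> [u vu]; rewrite /Wv /WA (bigD1 u) /=; last by rewrite in_setT vu.
rewrite ltr_wpDr ?w_pos //; apply: sumr_ge0 => y /andP[/andP[_ /w_pos/ltW //]].
Qed.

Lemma WA_set0 v : WA set0 v = 0.
Proof. by rewrite /WA big_pred0 // => u; rewrite in_set0. Qed.

Lemma set0_not_wppids v : (exists u, e v u) -> ~ is_wppids e w set0.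
Proof.
move=> /Wv_gt0 Wv0 /(_ v (negbT (in_set0 v))).
by rewrite WA_set0 leNgt divr_gt0.
Qed.

Lemma hA_set0 v : hA set0 v = 0.
Proof.
rewrite hAE /influence WA_set0 in_set0 mul0r addr0.
by apply/min_idPr; rewrite half_weight_ge0.
Qed.

Lemma h_set0 : h set0 = 0.
Proof. by rewrite /h big1 // => v _; exact: hA_set0. Qed.

Lemma Delta_set0_le (e_sym : symmetric e) (w_sym : forall u v, w u v = w v u) x :
  Delta x set0 <= 3%:R / 2%:R * Wv x.
Proof.
have -> : Delta x set0 = h [set x] by rewrite /Delta setU0 h_set0 subr0.
have hA_le v : hA [set x] v <= (if e v x then w v x else 0) + (x == v)%:R * half_weight v.
  by rewrite -[set1 x]setU0 hAE influence_setU1 in_set0 /influence WA_set0 in_set0 /= mul0r !add0r ge_min lexx orbT.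
apply: le_trans (ler_sum _ (fun v _ => hA_le v)) _.
rewrite big_split /= [X in _ + X <= _](bigD1 x) //= eqxx mul1r.
rewrite [X in half_weight x + X]big1 => [|v vx]; last by rewrite eq_sym (negbTE vx) mul0r.
have -> : \sum_v (if e v x then w v x else 0) = Wv x.
  rewrite /Wv /WA [RHS]big_mkcond /=; apply: eq_bigr => v _.
  by rewrite in_setT e_sym w_sym.
rewrite addr0 /half_weight; lra.
Qed.

Lemma hA_scaled_int A v : hA A v * (lv e w v)%:R \is a Num.int.
Proof.
rewrite /hA; case: ifP => _; first by rewrite mul_denq_dvd_int // dvdn_lcml.
rewrite /WA mulr_suml rpred_sum // => u /andP[_ vu].
rewrite mul_denq_dvd_int // (dvdn_trans _ (dvdn_lcmr _ _)) //.
by move/dvdn_biglcmP: (dvdnn (\big[lcmn/1%N]_(u | e v u) `|denq (w v u)|%N)); apply.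
Qed.

Lemma lv_gt0 v : (0 < lv e w v)%N.
Proof.
rewrite /lv lcmn_gt0 absz_gt0 denq_neq0 /=.
by elim/big_ind: _ => // [m n m0 n0 | u _]; rewrite ?lcmn_gt0 ?m0 ?absz_gt0 ?denq_neq0.
Qed.

Lemma Lmax_gt0 v : (0 < Lmax e w)%N.
Proof. exact: leq_trans (lv_gt0 v) (leq_bigmax v). Qed.

Lemma Delta_ge_inv_Lmax x A : 0 < Delta x A -> 1 / (Lmax e w)%:R <= Delta x A.
Proof.
move=> Delta_gt0.
have [v local_gt0] : exists v, 0 < hA (x |: A) v - hA A v.
  apply/existsP; apply: contraTT Delta_gt0 => /existsPn local_le0.
  by rewrite -leNgt DeltaE sumr_le0 // => v _; rewrite leNgt local_le0.
apply: le_trans (Delta_ge_local x A v); set d := _ - _ in local_gt0 *.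
have l_gt0 : (0 : rat) < (lv e w v)%:R by rewrite ltr0n lv_gt0.
have dl_ge1 : 1 <= d * (lv e w v)%:R.
  rewrite -[leRHS]gtr0_norm ?mulr_gt0 // norm_intr_ge1 ?mulf_neq0 ?gt_eqF //.
  by rewrite mulrBl rpredB ?hA_scaled_int.
rewrite ler_pdivrMr ?ltr0n ?(Lmax_gt0 v) //.
by rewrite (le_trans dl_ge1) // ler_wpM2l ?(ltW local_gt0) // ler_nat leq_bigmax.
Qed.

End InfluenceFunction.

Section GreedyRun.
Context {V : finType} {e : rel V} {w : V -> V -> rat}.
Hypothesis w_pos : forall u v, e u v -> 0 < w u v.
Implicit Types (x : V) (s : seq V).

Lemma gainsE A s : gains e w A s = gain_seq (h e w) A s.
Proof. by elim: s A => //= x s IH A; rewrite IH. Qed.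

Lemma greedy_run_from {s} : greedy_run e w s -> greedy_from (h e w) set0 s.
Proof.
case=> Hprefix _; apply: greedy_from_prefixes => t1 x t2 /Hprefix.
by rewrite set0U => -[].
Qed.

Lemma greedy_run_wppids {s} : greedy_run e w s -> is_wppids e w [set y in s].
Proof. by case=> _; exact: wppids_saturated. Qed.

Lemma delta_min_le x s g : g \in gain_seq (h e w) set0 (x :: s) -> delta_min e w (x :: s) <= g.
Proof. by rewrite -gainsE; exact: foldr_min_le. Qed.

Lemma delta_min_ge {x s} : greedy_run e w (x :: s) -> 1 / (Lmax e w)%:R <= delta_min e w (x :: s).
Proof.
move=> /greedy_run_from/greedy_gain_ge/(_ (Delta_ge_inv_Lmax w_pos)).
by rewrite -gainsE; exact: foldr_min_head_ge.
Qed.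

Lemma delta_max_le (e_sym : symmetric e) (w_sym : forall u v, w u v = w v u) x s :
  delta_max e w (x :: s) <= 3%:R / 2%:R * Wmax e w.
Proof.
apply: le_trans (Delta_set0_le w_pos e_sym w_sym x) _.
by apply: ler_wpM2l => //; exact: le_bigmax.
Qed.

Lemma greedy_run_card_le {R : realType} {Sstar x s} :
  is_wppids e w Sstar -> (0 < #|Sstar|)%N -> greedy_run e w (x :: s) ->
  (#|[set y in x :: s]|%:R : R) <=
    (1 + ln (ratr (delta_max e w (x :: s) / delta_min e w (x :: s)))) * #|Sstar|%:R.
Proof.
move=> Sstar_wppids Sstar_gt0 run.
have dmin_gt0 : 0 < delta_min e w (x :: s).
  by apply: lt_le_trans (delta_min_ge run); rewrite divr_gt0 ?ltr0n ?(Lmax_gt0 x).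
have := greedy_size_le_log (R := R) (h_subset w_pos) (Delta_antitone w_pos)
  (h_wppids _ Sstar_wppids) Sstar_gt0 dmin_gt0 (greedy_run_from run) (@delta_min_le x s).
by rewrite mulrC; apply: le_trans; rewrite ler_nat cardsE card_size.
Qed.

End GreedyRun.

Theorem mainTheorem14 (R : realType) (V : finType) (e : rel V) (w : V -> V -> rat)
  (e_sym : symmetric e) (e_irr : irreflexive e)
  (w_sym : forall u v, w u v = w v u)
  (w_pos : forall u v, e u v -> 0 < w u v)
  (V_nonempty : (0 < #|V|)%N)
  (no_isolated : forall v : V, exists u, e v u)
  (s : seq V) (Hrun : greedy_run e w s)
  (Sstar : {set V}) (Hstar : is_min_wppids e w Sstar) :
  let S := [set x in s] in
  [/\ is_wppids e w S,
      (#|S|%:R : R) <= (1 + ln (ratr (delta_max e w s / delta_min e w s) : R)) * #|Sstar|%:R,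
      delta_max e w s <= 3%:R / 2%:R * Wmax e w,
      1 / (Lmax e w)%:R <= delta_min e w s
    & (#|S|%:R : R) <= (1 + ln (3%:R / 2%:R * (Lmax e w)%:R * ratr (Wmax e w) : R)) * #|Sstar|%:R].
Proof.
have [u0 _] : exists u0, u0 \in V by apply/card_gt0P.
have no_wppids0 := set0_not_wppids w_pos _ (no_isolated u0).
have S_wppids := greedy_run_wppids w_pos Hrun.
case: s Hrun S_wppids => [|x s] Hrun S_wppids S; first by case: no_wppids0; rewrite -set_nil.
case: Hstar => Sstar_wppids _.
have Sstar_gt0 : (0 < #|Sstar|)%N by rewrite card_gt0; apply: contraPneq no_wppids0 => <-.
have dmin_ge := delta_min_ge w_pos Hrun.
have dmax_le := delta_max_le w_pos e_sym w_sym x s.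
have card_le := greedy_run_card_le (R := R) w_pos Sstar_wppids Sstar_gt0 Hrun.
split => //; apply: le_trans card_le _; rewrite ler_wpM2r // lerD2l.
have -> : 3%:R / 2%:R * (Lmax e w)%:R * ratr (Wmax e w) =
          ratr ((Lmax e w)%:R * (3%:R / 2%:R * Wmax e w)) :> R.
  by rewrite !rmorphM /= fmorphV !rmorph_nat; ring.
apply: ln_ratr_div_le dmax_le; first by rewrite ltr0n (Lmax_gt0 x).
  by rewrite -div1r.
exact: delta_min_le (mem_head _ _).
Qed.
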